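(* Let $n\ge 2$, let $T=\{1,\dots,n\}$ and let $\mathcal T$ be a topology on $T$. Fix an integer $k\ge 1$ and let $X_{k-1}$ be the set of points $\alpha\in T\setminus\{n\}$ whose covering set $\alpha^{*}$ is an $m$-system for some $m<k$. Let $P$ be a $k$-system of $\mathcal T$ with $P\setminus\{n\}\subseteq X_{k-1}$. Then either $P$ is a union of $k'$-systems with $k'<k$, or $P=n^{*}$.
   Context: For $\alpha\in T$, $\alpha^{*}$ (the covering set of $\alpha$) denotes the smallest open set of $\mathcal T$ containing $\alpha$. For an integer $m\ge 0$, an $m$-system is an open set $P$ of $\mathcal T$ such that $P\setminus\{n\}$ has exactly $m$ points. *)

From mathcomp Require Import all_boot.
Set Implicit Arguments. Unset Strict Implicit. Unset Printing Implicit Defensive.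

(* A topology on a finite type T, given by its family of open sets.
   On a finite type, closure under arbitrary unions is equivalent to
   closure under binary unions together with containing set0. *)
Definition is_topology (T : finType) (tau : {set {set T}}) : Prop :=
  [/\ set0 \in tau, [set: T] \in tau,
      (forall U V, U \in tau -> V \in tau -> U :|: V \in tau)
    & (forall U V, U \in tau -> V \in tau -> U :&: V \in tau)].

Definition covset (T : finType) (tau : {set {set T}}) (a : T) : {set T} :=
  \bigcap_(U in tau | a \in U) U.

Definition msys (T : finType) (tau : {set {set T}}) (p : T) (m : nat)
  (P : {set T}) : bool := (P \in tau) && (#|P :\ p| == m).

Definition Xset (T : finType) (tau : {set {set T}}) (p : T) (j : nat) : {set T} :=
  [set a | (a != p) && [exists m : 'I_j.+1, msys tau p m (covset tau a)]].

Lemma predn_lt (n : nat) : 1 < n -> n.-1 < n.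
Proof. by case: n. Qed.

(* the point "n" of T = {1,...,n}, modelled as the ordinal of value n-1 in 'I_n *)
Definition top_pt (n : nat) (hn : 1 < n) : 'I_n := Ordinal (predn_lt hn).

From mathcomp Require Import all_boot.

(* Every open set U is the union of the covering sets of its points, so P is
   the union of the a^* for a in P.  For a <> n these are m-systems with
   m < k by the hypothesis on X_{k-1}; the only remaining piece is n^*, which
   is either all of P or a proper open subset of P containing n, hence an
   m-system with m < k. *)

Section CoveringSets.

Local Set Implicit Arguments.
Local Unset Strict Implicit.

Variable T : finType.

Lemma properSD1 (A B : {set T}) (x : T) :
  x \in A -> A \proper B -> A :\ x \proper B :\ x.
Proof.
move=> xA /andP [sAB not_sBA]; rewrite properE setSD //=.
apply: contra not_sBA => sBA; apply/subsetP => y yB.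
have [-> //|yx] := eqVneq y x.
by have := subsetP sBA y; rewrite !in_setD1 yx yB => /(_ isT).
Qed.

Variable tau : {set {set T}}.

Lemma covset_open (a : T) : is_topology tau -> covset tau a \in tau.
Proof.
case=> _ tauT _ tauI.
by apply: (big_ind (fun S => S \in tau)) => // U /andP [].
Qed.

Lemma mem_covset (a : T) : a \in covset tau a.
Proof. by apply/bigcapP => U /andP []. Qed.

Lemma covset_min (a : T) (U : {set T}) :
  U \in tau -> a \in U -> covset tau a \subset U.
Proof. by move=> tauU aU; apply: bigcap_inf; rewrite tauU aU. Qed.

Lemma open_bigcup_covset (U : {set T}) :
  U \in tau -> U = \bigcup_(V in [set covset tau a | a in U]) V.
Proof.
move=> tauU; apply/setP => x; apply/idP/bigcupP => [xU | [_ /imsetP [a aU ->]]].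
  by exists (covset tau x); [exact: imset_f | exact: mem_covset].
by move/subsetP: (covset_min tauU aU); apply.
Qed.

Lemma Xset_msys_covset (p a : T) (j : nat) :
  a \in Xset tau p j -> exists2 m, m <= j & msys tau p m (covset tau a).
Proof.
by rewrite inE => /andP [_ /existsP [m msys_a]]; exists m; rewrite // -ltnS ltn_ord.
Qed.

Lemma msys_covset_proper (p : T) (P : {set T}) :
  is_topology tau -> covset tau p \proper P ->
  exists2 m, m < #|P :\ p| & msys tau p m (covset tau p).
Proof.
move=> htau covp_lt; exists #|covset tau p :\ p|.
  exact: proper_card (properSD1 (mem_covset p) covp_lt).
by rewrite /msys covset_open ?eqxx.
Qed.

End CoveringSets.

Theorem theorem1 (n : nat) (hn : 1 < n) (tau : {set {set 'I_n}})
  (htau : is_topology tau) (k : nat) (hk : 1 <= k) (P : {set 'I_n})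
  (hP : msys tau (top_pt hn) k P)
  (hPX : P :\ top_pt hn \subset Xset tau (top_pt hn) k.-1) :
  (exists F : {set {set 'I_n}},
      (forall Q, Q \in F -> exists k', k' < k /\ msys tau (top_pt hn) k' Q)
      /\ P = \bigcup_(Q in F) Q)
  \/ P = covset tau (top_pt hn).
Proof.
set p := top_pt hn in hP hPX *; move: hP => /andP [tauP /eqP cardP].
have [<-|covp_neq] := eqVneq (covset tau p) P; [by right | left].
exists [set covset tau a | a in P]; split; last exact: open_bigcup_covset.
move=> _ /imsetP [a + ->]; have [-> pP | a_neq_p aP] := eqVneq a p.
  have covp_lt : covset tau p \proper P by rewrite properEneq covp_neq covset_min.
  have [m ltm msys_p] := msys_covset_proper htau covp_lt.
  by exists m; rewrite -cardP.
have /Xset_msys_covset [m lem msys_a] : a \in Xset tau p k.-1.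
  by apply: (subsetP hPX); rewrite in_setD1 a_neq_p.
by exists m; rewrite -(prednK hk) ltnS.
Qed.
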